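(* A $t$-$(v,k,\lambda)$ design has a zero-sum $2$-flow if and only if it is even.
   Context: A $t$-$(v,k,\lambda)$ design is a pair $(X,\mathcal{B})$ with $|X|=v$ and $\mathcal{B}$ a collection of $k$-subsets of $X$ such that every $t$-subset of $X$ lies in exactly $\lambda$ blocks; let $r$ be the number of blocks containing a given point. A design is $\alpha$-resolvable if $\mathcal{B}$ can be partitioned into classes ($\alpha$-parallel classes) such that each point of $X$ lies in exactly $\alpha$ blocks of each class; the number of classes is then $\rho=r/\alpha$. The design is even if it is $\alpha$-resolvable for some $\alpha$ with $\rho$ even. A zero-sum $2$-flow is a map $f:\mathcal{B}\to\{\pm1\}$ such that $\sum_{B\ni x} f(B)=0$ for every $x\in X$. *)

From mathcomp Require Import all_boot all_order all_algebra.
Set Implicit Arguments. Unset Strict Implicit. Unset Printing Implicit Defensive.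
Import GRing.Theory Num.Theory.

(* A (possibly multi-)collection of blocks is given as a family
   blk : I -> {set X} indexed by a finite type I (repeated blocks allowed). *)

Definition is_design (X I : finType) (blk : I -> {set X}) (t v k lam : nat) : Prop :=
  [/\ #|X| = v,
      (forall i : I, #|blk i| = k) &
      (forall T : {set X}, #|T| = t -> #|[set i : I | T \subset blk i]| = lam)].

Definition alpha_resolution (X I : finType) (blk : I -> {set X}) (alpha rho : nat)
    (cls : I -> 'I_rho) : Prop :=
  [/\ 0 < alpha,
      (forall j : 'I_rho, exists i : I, cls i = j) &
      (forall (j : 'I_rho) (x : X), #|[set i : I | (cls i == j) && (x \in blk i)]| = alpha)].

Definition even_design (X I : finType) (blk : I -> {set X}) : Prop :=
  exists (alpha rho : nat) (cls : I -> 'I_rho),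
    @alpha_resolution X I blk alpha rho cls /\ ~~ odd rho.

Definition zero_sum_2flow (X I : finType) (blk : I -> {set X}) (f : I -> int) : Prop :=
  (forall i : I, f i = 1%R \/ f i = (-1)%R) /\
  (forall x : X, (\sum_(i : I | x \in blk i) f i)%R = 0%R).

From mathcomp Require Import all_boot all_order all_algebra.
Set Implicit Arguments. Unset Strict Implicit. Unset Printing Implicit Defensive.
Import GRing.Theory Num.Theory.

(* Double counting the pairs (block B, t-set T) with
      x \in T \subset B shows r_x * ('C(k,t) - 'C(k-1,t)) =
      ('C(v,t) - 'C(v-1,t)) * lambda, where r_x is the number of blocks
      through x; the factor on the left is positive, so r_x is constant.
   2. Flow => even, for any incidence structure with constant replication
      and nonempty blocks: a {+1,-1} labelling summing to zero at x puts
      exactly r/2 blocks of each sign through x, so the two sign classes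
      form an (r/2)-resolution with 2 classes (an empty family of blocks is
      trivially resolved by 0 classes).
   3. Even => flow, for any family of blocks: give the blocks of class j
      the sign (-1)^j; at each point the alpha-fold alternating sum over an
      even number of classes vanishes. *)

Definition replication (X I : finType) (blk : I -> {set X}) (x : X) : nat :=
  #|[set i | x \in blk i]|.

(* Number of t-subsets of an n-set that contain a given point. *)
Definition tsets_through (n t : nat) : nat := 'C(n, t) - 'C(n.-1, t).

Lemma card_tsets_through (X : finType) (A : {set X}) (x : X) (t : nat) :
  x \in A ->
  #|[set T : {set X} | [&& T \subset A, x \in T & #|T| == t]]| =
  tsets_through #|A| t.
Proof.
move=> xA.
have split_x : [set T : {set X} | [&& T \subset A, x \in T & #|T| == t]] =
    [set T : {set X} | T \subset A & #|T| == t]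
    :\: [set T : {set X} | T \subset A :\ x & #|T| == t].
  apply/setP => T; rewrite !inE subsetD1.
  by case: (T \subset A); case: (x \in T); case: (#|T| == t).
rewrite split_x cardsD (setIidPr _); last first.
  by apply/subsetP => T; rewrite !inE subsetD1 => /andP[/andP[-> _] ->].
by rewrite !cards_draws (cardsD1 x A) xA.
Qed.

Lemma tsets_through_gt0 (n t : nat) : 0 < t -> t <= n -> 0 < tsets_through n t.
Proof.
case: n => [|n]; case: t => [|t] //= _ le_tn.
by rewrite /tsets_through binS addKn bin_gt0.
Qed.

(* The classical relation r * C'(k,t) = C'(v,t) * lambda, by double counting
   the pairs (i, T) with x \in T \subset blk i and #|T| = t. *)
Lemma design_replication (X I : finType) (blk : I -> {set X}) (t v k lam : nat)
    (x : X) :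
  is_design blk t v k lam ->
  replication blk x * tsets_through k t = tsets_through v t * lam.
Proof.
move=> [card_X card_blk card_tsets].
pose flag (i : I) (T : {set X}) : nat := [&& T \subset blk i, x \in T & #|T| == t].
have by_blocks : \sum_i \sum_T flag i T = replication blk x * tsets_through k t.
  rewrite -sum_nat_const [RHS]big_mkcond; apply: eq_bigr => i _; rewrite inE.
  case xi: (x \in blk i).
    rewrite -(card_blk i) -(card_tsets_through t xi) -sum1_card [RHS]big_mkcond.
    by apply: eq_bigr => T _; rewrite inE.
  rewrite big1 // => T _; rewrite /flag.
  by case sT: (T \subset blk i); case xT: (x \in T); rewrite // (subsetP sT _ xT) in xi.
have by_tsets : \sum_T \sum_i flag i T = tsets_through v t * lam.
  rewrite -card_X -cardsT -(card_tsets_through t (in_setT x)) -sum_nat_const.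
  rewrite [RHS]big_mkcond; apply: eq_bigr => T _; rewrite inE subsetT /=.
  have [/andP[xT tT] | not_xTt] := boolP ((x \in T) && (#|T| == t)); last first.
    rewrite big1 // => i _; rewrite /flag; move: not_xTt.
    by case: (x \in T); case: (#|T| == t); rewrite ?andbF.
  rewrite -(card_tsets _ (eqP tT)) -sum1_card [RHS]big_mkcond.
  by apply: eq_bigr => i _; rewrite inE /flag xT tT !andbT.
by rewrite -by_blocks -by_tsets exchange_big.
Qed.

Lemma design_regular (X I : finType) (blk : I -> {set X}) (t v k lam : nat) :
  0 < t -> t <= k -> is_design blk t v k lam ->
  forall x y, replication blk x = replication blk y.
Proof.
move=> t_gt0 le_tk design x y; apply/eqP.
rewrite -(eqn_pmul2r (tsets_through_gt0 t_gt0 le_tk)).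
by rewrite !(design_replication _ design).
Qed.

Local Open Scope ring_scope.

Lemma sum_signs (I : finType) (P : pred I) (f : I -> int) :
  (forall i, f i = 1 \/ f i = -1) ->
  \sum_(i | P i) f i =
  #|[set i | P i && (f i == 1)]|%:Z - #|[set i | P i && (f i != 1)]|%:Z.
Proof.
move=> f_sign; rewrite (bigID (fun i => f i == 1)) /=.
rewrite (eq_bigr (fun _ => 1)); last by move=> i /andP[_ /eqP].
rewrite [X in _ + X](eq_bigr (fun _ => -1)); last first.
  by move=> i /andP[_]; case: (f_sign i) => ->.
rewrite !sumr_const mulNrn.
by rewrite !natz; congr (_%:Z - _%:Z); apply: eq_card => i; rewrite inE.
Qed.

Lemma alternating_sum_double (m : nat) :
  \sum_(j < m.*2) ((-1) ^+ j : int) = 0.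
Proof.
rewrite -(big_mkord xpredT (fun j => ((-1) ^+ j : int))).
elim: m => [|m IH]; first by rewrite big_geq.
rewrite doubleS !big_nat_recr //= IH add0r exprS -signr_odd odd_double expr0.
by rewrite mulr1 addrN.
Qed.

Section FlowToEven.

Variables (X I : finType) (blk : I -> {set X}) (f : I -> int).
Hypothesis regular : forall x y, replication blk x = replication blk y.
Hypothesis blk_nonempty : forall i, blk i != set0.
Hypothesis flow : zero_sum_2flow blk f.

Let plus_deg (x : X) : nat := #|[set i | (x \in blk i) && (f i == 1)]|.
Let minus_deg (x : X) : nat := #|[set i | (x \in blk i) && (f i != 1)]|.

Lemma flow_balanced (x : X) : plus_deg x = minus_deg x.
Proof.
have [f_sign zero_sum] := flow.
by have /eqP := zero_sum x; rewrite sum_signs // subr_eq0 => /eqP[].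
Qed.

Lemma replication_split (x : X) :
  replication blk x = (plus_deg x + minus_deg x)%N.
Proof.
rewrite /replication -(cardsID [set i | f i == 1]) /plus_deg /minus_deg.
by congr (_ + _)%N; apply: eq_card => i; rewrite !inE // andbC.
Qed.

Lemma flow_half_replication (x y : X) :
  plus_deg x = (replication blk y)./2 /\ minus_deg x = (replication blk y)./2.
Proof.
rewrite -(regular x) replication_split -flow_balanced addnn doubleK.
by split; last rewrite flow_balanced.
Qed.

(* The sign classes form an alpha-resolution with rho = 2, alpha = r/2 > 0;
   with no blocks at all, rho = 0 classes do. *)
Lemma even_of_flow : even_design blk.
Proof.
case: (pickP (fun _ : I => true)) => [i0 _ | no_block]; last first.
  have cls (i : I) : 'I_0 by have := no_block i.
  by exists 1, 0, cls; split => //; split => // -[].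
have /set0Pn [x0 x0_i0] := blk_nonempty i0.
have [plus_x0 minus_x0] := flow_half_replication x0 x0.
set alpha := (replication blk x0)./2 in plus_x0 minus_x0 *.
have alpha_gt0 : (0 < alpha)%N.
  have r_gt0 : (0 < replication blk x0)%N by apply/card_gt0P; exists i0; rewrite inE.
  by move: r_gt0; rewrite replication_split plus_x0 minus_x0 addnn double_gt0.
pose sign_class i : 'I_2 := if f i == 1 then ord0 else ord_max.
exists alpha, 2, sign_class; split => //; split => //.
- case=> -[|[|//]] j_lt2.
  + move: alpha_gt0; rewrite -plus_x0 card_gt0 => /set0Pn[i].
    by rewrite inE => /andP[_ fi]; exists i; apply: val_inj; rewrite /sign_class fi.
  + move: alpha_gt0; rewrite -minus_x0 card_gt0 => /set0Pn[i].
    by rewrite inE => /andP[_ fi]; exists i; apply: val_inj; rewrite /sign_class (negbTE fi).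
- case=> -[|[|//]] j_lt2 x; have [plus_x minus_x] := flow_half_replication x x0.
  + rewrite /alpha -plus_x; apply: eq_card => i; rewrite !inE /sign_class.
    by case: (f i == 1); rewrite ?andbT ?andbF.
  + rewrite /alpha -minus_x; apply: eq_card => i; rewrite !inE /sign_class.
    by case: (f i == 1); rewrite ?andbT ?andbF.
Qed.

End FlowToEven.

Lemma flow_of_even (X I : finType) (blk : I -> {set X}) :
  even_design blk -> exists f : I -> int, zero_sum_2flow blk f.
Proof.
move=> [alpha [rho [cls [[_ _ class_deg] rho_even]]]].
exists (fun i => (-1) ^+ cls i); split.
  by move=> i; rewrite -signr_odd; case: odd; [right|left].
move=> x; rewrite (partition_big cls xpredT) //=.
transitivity (\sum_(j < rho) ((-1) ^+ j : int) *+ alpha).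
  apply: eq_bigr => j _.
  rewrite (eq_bigr (fun _ => (-1) ^+ j)); last by move=> i /andP[_ /eqP ->].
  rewrite sumr_const -(class_deg j x); congr (_ *+ _).
  by apply: eq_card => i; rewrite !inE andbC.
rewrite sumrMnl -(odd_double_half rho) (negbTE rho_even) add0n.
by rewrite alternating_sum_double mul0rn.
Qed.

Theorem mainTheorem11 (X I : finType) (blk : I -> {set X}) (t v k lam : nat) :
  (0 < t)%N -> (t <= k)%N ->
  is_design blk t v k lam ->
  (exists f : I -> int, zero_sum_2flow blk f) <-> even_design blk.
Proof.
move=> t_gt0 le_tk design; split; last exact: flow_of_even.
have regular := design_regular t_gt0 le_tk design.
have blk_nonempty (i : I) : blk i != set0.
  have [_ card_blk _] := design.
  by rewrite -card_gt0 card_blk (leq_trans t_gt0 le_tk).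
by move=> [f flow]; exact: even_of_flow regular blk_nonempty flow.
Qed.
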